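(* Let $\psi\in\mathcal A$ with $S_\psi=0$. Then $\psi=0$ (identically on $G\times Y\times Y$).
   Context: Let $G$ be a locally compact abelian group (written additively) with Haar measure $\nu$, and $(Y,\lambda)$ a measure space. Let $H$ be a reproducing kernel Hilbert space of complex functions on $G\times Y$ whose inner product is that of $L^2(G\times Y,\nu\otimes\lambda)$, with reproducing kernel $(K_{x,y})_{(x,y)\in G\times Y}$ (so $f(x,y)=\langle f,K_{x,y}\rangle$). Assume $K_{x,y}(u,v)=K_{0,y}(u-x,v)$ for all $u,x\in G$, $v,y\in Y$. Let $\mathcal A_0$ be the set of functions $\psi\colon G\times Y\times Y\to\mathbb C$ such that $\psi(\cdot,\cdot,v)\in H$ for every $v\in Y$ and $(u,v)\mapsto\overline{\psi(-u,y,v)}$ belongs to $H$ for every $y\in Y$. For $\psi\in\mathcal A_0$, $f\in H$, define $(S_\psi f)(x,y)=\int_{G\times Y}f(u,v)\psi(x-u,y,v)\,d\nu(u)\,d\lambda(v)$. Let $\mathcal A$ be the set of $\psi\in\mathcal A_0$ such that $S_\psi f\in H$ for all $f\in H$ and $S_\psi$ is bounded on $H$. *)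

From HB Require Import structures.
From mathcomp Require Import all_boot all_order all_algebra.
From mathcomp Require Import all_classical all_reals all_analysis.
From mathcomp Require Import complex.
Set Implicit Arguments.
Unset Strict Implicit.
Unset Printing Implicit Defensive.
Import Order.TTheory GRing.Theory Num.Theory.
Local Open Scope classical_set_scope.
Local Open Scope ring_scope.
Local Open Scope complex_scope.

(* a pointed copy of a topological abelian group (pointed at 0), needed to
   build the Borel sigma-algebra with the library's g_sigma_algebraType *)
Definition ptd (G : topologicalZmodType) : Type := G.
HB.instance Definition _ (G : topologicalZmodType) := Choice.on (ptd G).
HB.instance Definition _ (G : topologicalZmodType) := isPointed.Build (ptd G) (0 : G).
Notation borel G := (@g_sigma_algebraType (ptd G) (@open G)).

Definition LCA_group (G : topologicalZmodType) : Prop :=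
  hausdorff_space G /\ locally_compact [set: G].

Section Defs.
Context {R : realType}.
Local Notation C := R[i].

(* Haar measure: a nonzero translation-invariant Radon measure on the Borel sets
   (finite on compacts, outer regular on Borel sets, inner regular on open sets). *)
Definition haar_measure (G : topologicalZmodType)
    (nu : {measure set (borel G) -> \bar R}) : Prop :=
  [/\ forall (x : G) (A : set (borel G)), measurable A ->
        nu [set (x + a : G) | a in A] = nu A,
      nu [set: borel G] != 0%E,
      forall K : set G, compact K -> (nu K < +oo)%E,
      forall A : set (borel G), measurable A ->
        nu A = ereal_inf [set nu U | U in [set U : set G | open U /\ A `<=` U]]
    & forall U : set G, open U ->
        nu U = ereal_sup [set nu K | K in [set K : set G | compact K /\ K `<=` U]]].

Definition cintegral d (T : measurableType d) (mu : set T -> \bar R) (f : T -> C) : C :=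
  (fine (integral mu setT (fun x => (complex.Re (f x))%:E)))%:C +
  'i * (fine (integral mu setT (fun x => (complex.Im (f x))%:E)))%:C.

Definition cnorm2 (z : C) : R := complex.Re z ^+ 2 + complex.Im z ^+ 2.

Definition L2fun d (T : measurableType d) (mu : set T -> \bar R) (f : T -> C) : Prop :=
  [/\ measurable_fun setT (fun x => complex.Re (f x)),
      measurable_fun setT (fun x => complex.Im (f x))
    & (integral mu setT (fun x => (cnorm2 (f x))%:E) < +oo)%E].

Definition l2_ip d (T : measurableType d) (mu : set T -> \bar R) (f g : T -> C) : C :=
  cintegral mu (fun x => f x * (g x)^*).

Definition l2_norm d (T : measurableType d) (mu : set T -> \bar R) (f : T -> C) : R :=
  Num.sqrt (complex.Re (l2_ip mu f f)).

(* H is a reproducing kernel Hilbert space of complex functions on T, whose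
   inner product is that of L^2(T, mu), with reproducing kernel (K t)_{t in T}. *)
Definition is_RKHS d (T : measurableType d) (mu : set T -> \bar R)
    (H : set (T -> C)) (K : T -> T -> C) : Prop :=
  [/\ H `<=` L2fun mu,
      [/\ H (fun _ => 0),
          (forall f g, H f -> H g -> H (fun x => f x + g x)) &
          (forall (c : C) f, H f -> H (fun x => c * f x))],
      (forall u : nat -> T -> C, (forall n, H (u n)) ->
        (forall e : R, 0 < e -> exists N, forall n m, (N <= n)%N -> (N <= m)%N ->
            l2_norm mu (fun x => u n x - u m x) < e) ->
        exists f, H f /\ forall e : R, 0 < e -> exists N, forall n, (N <= n)%N ->
            l2_norm mu (fun x => u n x - f x) < e),
      (forall t, H (K t))
    & (forall f t, H f -> f t = l2_ip mu f (K t))].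

Context (G : topologicalZmodType) (nu : {measure set (borel G) -> \bar R})
  (dY : measure_display) (Y : measurableType dY) (lam : {measure set Y -> \bar R}).

Definition prodm : set (borel G * Y) -> \bar R := (nu \x lam)%E.

Definition in_A0 (H : set (borel G * Y -> C)) (psi : G -> Y -> Y -> C) : Prop :=
  (forall v : Y, H (fun z : borel G * Y => psi z.1 z.2 v)) /\
  (forall y : Y, H (fun z : borel G * Y => (psi (- (z.1 : G)) y z.2)^*)).

Definition S_op (psi : G -> Y -> Y -> C) (f : borel G * Y -> C) : borel G * Y -> C :=
  fun xy => cintegral prodm
    (fun z : borel G * Y => f z * psi ((xy.1 : G) - (z.1 : G)) xy.2 z.2).

Definition in_A (H : set (borel G * Y -> C)) (psi : G -> Y -> Y -> C) : Prop :=
  [/\ in_A0 H psi,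
      (forall f, H f -> H (S_op psi f))
    & exists M : R, forall f, H f -> l2_norm prodm (S_op psi f) <= M * l2_norm prodm f].

End Defs.

(** The pairing [S_psi f (0, y) = int f(z) psi(-z1, y, z2)] is the L^2 inner
    product of [f] with [g_y z = conj (psi (-z1) y z2)], which lies in [H]
    because [psi] is in [A_0].  Taking [f = K_(-u, v)], the reproducing
    property gives [g_y (-u, v) = <g_y, K_(-u,v)> = conj <K_(-u,v), g_y>
    = conj (S_psi K_(-u,v) (0, y)) = 0], and [g_y (-u, v) = conj (psi u y v)]. *)

From HB Require Import structures.
From mathcomp Require Import all_boot all_order all_algebra.
From mathcomp Require Import all_classical all_reals all_analysis.
From mathcomp Require Import complex.
From mathcomp Require Import ring.
Import Order.TTheory GRing.Theory Num.Theory.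
Local Open Scope classical_set_scope.
Local Open Scope ring_scope.
Local Open Scope complex_scope.

Section ComplexIntegral.
Context {R : realType} d (T : measurableType d) (mu : set T -> \bar R).

Lemma fine_integralN (f : T -> R) :
  fine (integral mu setT (fun x => (- f x)%:E)) =
  - fine (integral mu setT (fun x => (f x)%:E)).
Proof.
rewrite /integral.
have -> : (fun x => (- f x)%:E) \_ setT = (\- ((fun x => (f x)%:E) \_ setT))%E.
  by apply/funext => x; rewrite !patchE /= mem_set.
rewrite funeposN funenegN.
by case: (ereal_sup _) => [a||]; case: (ereal_sup _) => [b||] //=;
  rewrite ?oppr0 ?opprB.
Qed.

Lemma cintegral_conj (f : T -> R[i]) :
  cintegral mu (fun x => (f x)^*) = (cintegral mu f)^*.
Proof.
rewrite /cintegral.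
have -> : (fun x => (complex.Re (f x)^*)%:E) = (fun x => (complex.Re (f x))%:E).
  by apply/funext => x; case: (f x).
have -> : (fun x => (complex.Im (f x)^*)%:E) = (fun x => (- complex.Im (f x))%:E).
  by apply/funext => x; case: (f x).
rewrite fine_integralN.
by apply/eqP; rewrite eq_complex /=; apply/andP; split; apply/eqP; ring.
Qed.

Lemma l2_ipC (f g : T -> R[i]) : l2_ip mu f g = (l2_ip mu g f)^*.
Proof.
rewrite /l2_ip -cintegral_conj; congr cintegral; apply/funext => x.
by rewrite rmorphM /= conjcK mulrC.
Qed.

End ComplexIntegral.

Lemma S_opE {R : realType} (G : topologicalZmodType)
    (nu : {measure set (borel G) -> \bar R})
    (dY : measure_display) (Y : measurableType dY) (lam : {measure set Y -> \bar R})
    (psi : G -> Y -> Y -> R[i]) (f : borel G * Y -> R[i]) (x : G) (y : Y) :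
  S_op nu lam psi f (x, y) =
  l2_ip (prodm nu lam) f (fun z => (psi (x - (z.1 : G)) y z.2)^*).
Proof.
by rewrite /S_op /l2_ip; congr cintegral; apply/funext => z; rewrite /= conjCK.
Qed.

Theorem proposition5p11 (R : realType) (G : topologicalZmodType)
  (nu : {measure set (borel G) -> \bar R})
  (dY : measure_display) (Y : measurableType dY) (lam : {measure set Y -> \bar R})
  (H : set (borel G * Y -> R[i])) (K : borel G * Y -> borel G * Y -> R[i])
  (psi : G -> Y -> Y -> R[i]) :
  LCA_group G -> haar_measure nu ->
  is_RKHS (prodm nu lam) H K ->
  (forall (x u : G) (y v : Y), K (x, y) (u, v) = K (0, y) (u - x, v)) ->
  in_A nu lam H psi ->
  (forall f, H f -> S_op nu lam psi f = (fun _ => 0)) ->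
  forall (u : G) (y v : Y), psi u y v = 0.
Proof.
move=> _ _ [_ _ _ HK reproducing] _ [[_ Hg] _ _] S0 u y v.
pose g := fun z : borel G * Y => (psi (- (z.1 : G)) y z.2)^*.
pose t : borel G * Y := (- u, v).
have g_eq : g = (fun z => (psi (0 - (z.1 : G)) y z.2)^*).
  by apply/funext => z; rewrite sub0r.
have gt0 : g t = 0.
  rewrite (reproducing g t (Hg y)) l2_ipC g_eq -S_opE.
  by rewrite (S0 _ (HK t)) conjc0.
change ((psi (- - u) y v)^* = 0) in gt0.
by move/eqP: gt0; rewrite opprK conjc_eq0 => /eqP.
Qed.
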